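(* Let $N_p\in\mathbb{N}$, $A,B\in\mathbb{C}^{N_p\times N_p}$ with $A^\dagger=A$, $B^T=B$, let $\Omega=\operatorname{diag}[\Omega_i]_{i=1}^{N_p}$ with all $\Omega_i>0$, and let $X,Y\in\mathbb{C}^{N_p\times N_p}$ be such that $W=\begin{bmatrix} X & Y^*\\ Y & X^*\end{bmatrix}$ satisfies $$\eta\begin{bmatrix} A & B\\ B^* & A^*\end{bmatrix}=W\begin{bmatrix}+\Omega & 0\\ 0&-\Omega\end{bmatrix}W^{-1},\qquad W^{-1}=\eta W^\dagger\eta,\qquad \eta=\begin{bmatrix}+I&0\\0&-I\end{bmatrix}.$$ Let $x_i=X\mathbf e_i$, $y_i=Y\mathbf e_i$, let $\widetilde\Omega_1,\dots,\widetilde\Omega_{N_p}>0$, $\widetilde\Omega=\operatorname{diag}[\widetilde\Omega_i]$, and define $$\widetilde A=A+\sum_{i=1}^{N_p}(\widetilde\Omega_i-\Omega_i)\big[x_ix_i^\dagger+(y_iy_i^\dagger)^*\big],\qquad \widetilde B=B+\sum_{i=1}^{N_p}(\widetilde\Omega_i-\Omega_i)\big[-x_iy_i^\dagger-(x_iy_i^\dagger)^T\big].$$ Then $$\eta\begin{bmatrix} \widetilde A & \widetilde B\\ \widetilde B^* & \widetilde A^*\end{bmatrix}=W\begin{bmatrix}+\widetilde\Omega & 0\\ 0&-\widetilde\Omega\end{bmatrix}W^{-1},$$ i.e. the modified QRPA matrix has the same eigenvector matrix $W$ (still satisfying $W^{-1}=\eta W^\dagger\eta$) with eigenfrequencies $\widetilde\Omega_i$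 in place of $\Omega_i$.
   Context: $A^\dagger$, $A^T$, $A^*$ denote conjugate transpose, transpose and entrywise complex conjugate; $\mathbf e_i$ is the $i$-th standard basis vector of $\mathbb{C}^{N_p}$; $\operatorname{diag}[\cdot]$ is the diagonal matrix with the given diagonal entries. The matrix $\eta\begin{bmatrix} A & B\\ B^* & A^*\end{bmatrix}$ is the QRPA matrix. *)

(* Complex numbers are modelled as R[i] = complex R
   for an arbitrary R : realType (so R[i] is the field of complex numbers). *)
From HB Require Import structures.
From mathcomp Require Import all_boot all_order all_algebra.
From mathcomp Require Import complex.
From mathcomp Require Import reals.
Set Implicit Arguments. Unset Strict Implicit. Unset Printing Implicit Defensive.
Import Order.TTheory GRing.Theory Num.Theory.
Local Open Scope ring_scope.

Definition ccmx (C : numClosedFieldType) (m n : nat) (A : 'M[C]_(m, n)) : 'M[C]_(m, n) :=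
  map_mx (fun z => z^*) A.

Definition daggermx (C : numClosedFieldType) (m n : nat) (A : 'M[C]_(m, n)) : 'M[C]_(n, m) :=
  (ccmx A)^T.

Definition etamx (C : numClosedFieldType) (n : nat) : 'M[C]_(n + n) :=
  block_mx 1%:M 0 0 (- 1%:M).

Definition qrpa_blocks (C : numClosedFieldType) (n : nat) (A B : 'M[C]_n) : 'M[C]_(n + n) :=
  block_mx A B (ccmx B) (ccmx A).

Definition Wmx (C : numClosedFieldType) (n : nat) (X Y : 'M[C]_n) : 'M[C]_(n + n) :=
  block_mx X (ccmx Y) Y (ccmx X).

Definition diagmx (C : numClosedFieldType) (n : nat) (om : 'I_n -> C) : 'M[C]_n :=
  diag_mx (\row_i om i).

Definition freqmx (C : numClosedFieldType) (n : nat) (om : 'I_n -> C) : 'M[C]_(n + n) :=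
  block_mx (diagmx om) 0 0 (- diagmx om).
Arguments etamx {C} n.

(* Frequencies enter linearly through freqmx, so subtracting the hypothesis
   leaves the identity  eta [[P, -Q], [-Q^*, P^*]] = W [[D, 0], [0, -D]] eta W^† eta
   for D = diag (omt - om), P = X D X^† + Y^* D Y^T and Q = X D Y^† + Y^* D X^T,
   the matrix forms of the rank-one sums defining At - A and -(Bt - B).  Since
   [[D, 0], [0, -D]] eta = [[D, 0], [0, D]] and D is real, W [[D, 0], [0, D]] W^†
   is the QRPA-shaped block matrix [[P, Q], [Q^*, P^*]], and multiplying such a
   matrix by eta on the right is the same as flipping the sign of Q and multiplying
   by eta on the left. *)

From HB Require Import structures.
From mathcomp Require Import all_boot all_order all_algebra.
From mathcomp Require Import complex.
From mathcomp Require Import reals.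
Import Order.TTheory GRing.Theory Num.Theory.
Local Open Scope ring_scope.

Section Matrices.
Variable C : numClosedFieldType.

Lemma ccmxD m n (A B : 'M[C]_(m, n)) : ccmx (A + B) = ccmx A + ccmx B.
Proof. exact: map_mxD. Qed.

Lemma ccmxN m n (A : 'M[C]_(m, n)) : ccmx (- A) = - ccmx A.
Proof. exact: map_mxN. Qed.

Lemma ccmxM m n p (A : 'M[C]_(m, n)) (B : 'M[C]_(n, p)) :
  ccmx (A *m B) = ccmx A *m ccmx B.
Proof. exact: map_mxM. Qed.

Lemma ccmx_trmx m n (A : 'M[C]_(m, n)) : ccmx A^T = (ccmx A)^T.
Proof. by rewrite /ccmx map_trmx. Qed.

Lemma ccmx_col m n j (A : 'M[C]_(m, n)) : ccmx (col j A) = col j (ccmx A).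
Proof. exact: map_col. Qed.

Lemma ccmxK m n (A : 'M[C]_(m, n)) : ccmx (ccmx A) = A.
Proof. by apply/matrixP=> i j; rewrite !mxE conjCK. Qed.

Lemma ccmx_block m1 m2 n1 n2 (Aul : 'M[C]_(m1, n1)) (Aur : 'M[C]_(m1, n2))
    (Adl : 'M[C]_(m2, n1)) (Adr : 'M[C]_(m2, n2)) :
  ccmx (block_mx Aul Aur Adl Adr) = block_mx (ccmx Aul) (ccmx Aur) (ccmx Adl) (ccmx Adr).
Proof. exact: map_block_mx. Qed.

Lemma ccmx_diagmx n (d : 'I_n -> C) : (forall i, d i \is Num.real) ->
  ccmx (diagmx d) = diagmx d.
Proof.
move=> d_real; apply/matrixP=> i j; rewrite !mxE rmorphMn.
by congr (_ *+ _); apply: conj_Creal.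
Qed.

Lemma diagmxB n (om om' : 'I_n -> C) :
  diagmx (fun i => om' i - om i) = diagmx om' - diagmx om.
Proof. by apply/matrixP=> i j; rewrite !mxE mulrnBl. Qed.

Lemma sum_scale_col_mul_trcol m p n (U : 'M[C]_(m, n)) (V : 'M[C]_(p, n)) d :
  \sum_i d i *: (col i U *m (col i V)^T) = U *m diagmx d *m V^T.
Proof.
apply/matrixP=> a b; rewrite /diagmx mul_mx_diag summxE !mxE.
by apply: eq_bigr => j _; rewrite !mxE big_ord1 !mxE mulrCA mulrA.
Qed.

End Matrices.

Section QrpaBlocks.
Variables (C : numClosedFieldType) (n : nat).

Lemma qrpa_blocksD (A B A' B' : 'M[C]_n) :
  qrpa_blocks (A + A') (B + B') = qrpa_blocks A B + qrpa_blocks A' B'.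
Proof. by rewrite /qrpa_blocks add_block_mx !ccmxD. Qed.

Lemma qrpa_blocks_mul_etamx (A B : 'M[C]_n) :
  qrpa_blocks A B *m etamx n = etamx n *m qrpa_blocks A (- B).
Proof.
rewrite /qrpa_blocks /etamx ccmxN !mulmx_block.
by rewrite !(mulmx0, mul0mx, mulmx1, mul1mx, mulmxN, mulNmx, addr0, add0r, opprK).
Qed.

Lemma freqmxB (om om' : 'I_n -> C) :
  freqmx om' - freqmx om = freqmx (fun i => om' i - om i).
Proof.
by rewrite /freqmx diagmxB opp_block_mx add_block_mx !oppr0 addr0 opprD.
Qed.

Lemma freqmx_mul_etamx (om : 'I_n -> C) :
  freqmx om *m etamx n = block_mx (diagmx om) 0 0 (diagmx om).
Proof.
rewrite /freqmx /etamx mulmx_block.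
by rewrite !(mulmx0, mul0mx, mulmx1, mulmxN, addr0, add0r, opprK).
Qed.

End QrpaBlocks.

Section Shift.
Variables (C : numClosedFieldType) (n : nat) (X Y : 'M[C]_n).

Definition shiftA (D : 'M[C]_n) := X *m D *m daggermx X + ccmx Y *m D *m Y^T.
Definition shiftB (D : 'M[C]_n) := X *m D *m daggermx Y + ccmx Y *m D *m X^T.

Lemma sum_scale_rank_oneA (d : 'I_n -> C) :
  \sum_i d i *: (col i X *m daggermx (col i X) + ccmx (col i Y *m daggermx (col i Y)))
  = shiftA (diagmx d).
Proof.
rewrite /shiftA /daggermx -!sum_scale_col_mul_trcol -big_split /=.
apply: eq_bigr => i _.
by rewrite scalerDr ccmxM ccmx_trmx !ccmx_col ccmxK.
Qed.

Lemma sum_scale_rank_oneB (d : 'I_n -> C) :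
  \sum_i d i *: (- (col i X *m daggermx (col i Y)) - (col i X *m daggermx (col i Y))^T)
  = - shiftB (diagmx d).
Proof.
rewrite /shiftB /daggermx -!sum_scale_col_mul_trcol -big_split /= -sumrN.
apply: eq_bigr => i _.
by rewrite trmx_mul trmxK !ccmx_col scalerDr !scalerN opprD.
Qed.

Lemma Wmx_block_mx_daggermx (D : 'M[C]_n) : ccmx D = D ->
  Wmx X Y *m block_mx D 0 0 D *m daggermx (Wmx X Y) = qrpa_blocks (shiftA D) (shiftB D).
Proof.
move=> D_real; rewrite /Wmx /daggermx /qrpa_blocks /shiftA /shiftB.
rewrite ccmx_block tr_block_mx !mulmx_block.
rewrite !(mulmx0, mul0mx, addr0, add0r) !ccmxD !ccmxM !ccmx_trmx !ccmxK D_real.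
by congr block_mx; rewrite addrC.
Qed.

Lemma etamx_qrpa_shift (d : 'I_n -> C) : (forall i, d i \is Num.real) ->
  etamx n *m qrpa_blocks (shiftA (diagmx d)) (- shiftB (diagmx d))
  = Wmx X Y *m freqmx d *m (etamx n *m daggermx (Wmx X Y) *m etamx n).
Proof.
move=> d_real; rewrite !mulmxA -(mulmxA _ (freqmx d)) freqmx_mul_etamx.
by rewrite Wmx_block_mx_daggermx ?ccmx_diagmx // qrpa_blocks_mul_etamx.
Qed.

End Shift.

Theorem mainTheorem3 (R : realType) (n : nat) (A B X Y : 'M[R[i]]_n)
  (om omt : 'I_n -> R[i]) :
  daggermx A = A ->
  B^T = B ->
  (forall i, 0 < om i) ->
  Wmx X Y \in unitmx ->
  invmx (Wmx X Y) = etamx n *m daggermx (Wmx X Y) *m etamx n ->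
  etamx n *m qrpa_blocks A B = Wmx X Y *m freqmx om *m invmx (Wmx X Y) ->
  (forall i, 0 < omt i) ->
  let At := A + \sum_(i < n) (omt i - om i) *:
              (col i X *m daggermx (col i X) + ccmx (col i Y *m daggermx (col i Y))) in
  let Bt := B + \sum_(i < n) (omt i - om i) *:
              (- (col i X *m daggermx (col i Y)) - (col i X *m daggermx (col i Y))^T) in
  etamx n *m qrpa_blocks At Bt = Wmx X Y *m freqmx omt *m invmx (Wmx X Y).
Proof.
move=> _ _ om_gt0 _ W_inv eig omt_gt0 At Bt.
have d_real i : omt i - om i \is Num.real by rewrite rpredB ?gtr0_real.
rewrite /At /Bt sum_scale_rank_oneA sum_scale_rank_oneB qrpa_blocksD mulmxDr eig.
rewrite -[freqmx omt](subrK (freqmx om)) freqmxB mulmxDr mulmxDl addrC.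
by rewrite etamx_qrpa_shift // W_inv.
Qed.
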